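(* Let $G=(V,E)$ be a simple 2-vertex-connected graph without irrelevant edges and without non-isolating 2-vertex-cuts. Let $(V_1,V_2)$ be a partition of $V$ such that for each $i\in\{1,2\}$, $|V_i|\ge 3$, and if $|V_i|=3$ then $G[V_i]$ is a triangle. Then there is a matching of size $3$ in $G$ consisting of edges each having one endpoint in $V_1$ and one in $V_2$.
   Context: A $k$-vertex-cut is a set of $k$ nodes whose removal disconnects the graph; a graph is 2-vertex-connected if it has at least 3 nodes, is connected and has no 1-vertex-cut. An edge $uv$ is irrelevant if $\{u,v\}$ is a 2-vertex-cut. A 2-vertex-cut $\{u,v\}$ is isolating if $G\setminus\{u,v\}$ has exactly two connected components, one of which consists of a single node; otherwise it is non-isolating. *)

From mathcomp Require Import all_boot.
Set Implicit Arguments. Unset Strict Implicit. Unset Printing Implicit Defensive.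

(* A simple graph: vertex type T : finType, adjacency e : rel T, assumed
   symmetric and irreflexive in the theorem. *)

Definition induced (T : finType) (e : rel T) (S : {set T}) : rel T :=
  [rel x y | [&& x \in S, y \in S & e x y]].

Definition connected_on (T : finType) (e : rel T) (S : {set T}) : Prop :=
  forall x y, x \in S -> y \in S -> connect (induced e S) x y.

Definition disconnects (T : finType) (e : rel T) (C : {set T}) : Prop :=
  ~ connected_on e (~: C).

Definition two_vertex_connected (T : finType) (e : rel T) : Prop :=
  [/\ 3 <= #|T|, connected_on e [set: T] & forall v : T, ~ disconnects e [set v]].

Definition two_cut (T : finType) (e : rel T) (u v : T) : Prop :=
  u != v /\ disconnects e [set u; v].

Definition irrelevant_edge (T : finType) (e : rel T) (u v : T) : Prop :=
  e u v /\ two_cut e u v.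

Definition components (T : finType) (e : rel T) (S : {set T}) : {set {set T}} :=
  [set [set y in S | connect (induced e S) x y] | x in S].

Definition isolating_cut (T : finType) (e : rel T) (u v : T) : Prop :=
  two_cut e u v /\
  (#|components e (~: [set u; v])| = 2 /\
   exists2 K, K \in components e (~: [set u; v]) & #|K| = 1).

Definition non_isolating_cut (T : finType) (e : rel T) (u v : T) : Prop :=
  two_cut e u v /\ ~ isolating_cut e u v.

From mathcomp Require Import all_boot.
From Stdlib Require Import Classical.
Set Implicit Arguments. Unset Strict Implicit. Unset Printing Implicit Defensive.

(* Suppose the edges between V1 and V2 contain no matching of size 3.  By
   König's theorem, in the elementary case of matching number at most 2, two
   vertices u, v then cover all of them.  Both sides have at least three
   vertices, so {u, v} separates a vertex of V1 from one of V2: it is a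
   2-vertex-cut, hence uv is not an edge and the cut is isolating, leaving a
   lone vertex w, say in V1.  Any further vertex of V1 outside {u, v} would
   give a third component, so V1 = {u, v, w} is a triangle and uv is an edge
   after all. *)

Section SmallKonig.
Variables (T : finType) (r : rel T).

Definition matching3 : Prop :=
  exists a1 a2 a3 b1 b2 b3 : T,
    [/\ [&& r a1 b1, r a2 b2 & r a3 b3],
        [&& a1 != a2, a1 != a3 & a2 != a3] &
        [&& b1 != b2, b1 != b3 & b2 != b3]].

Definition covers (u v : T) : Prop :=
  forall a b, r a b -> [|| a == u, a == v, b == u | b == v].

Definition out_nbr_outside (B : {set T}) (a : T) : Prop :=
  exists2 b, r a b & b \notin B.

Definition in_nbr_outside (A : {set T}) (b : T) : Prop :=
  exists2 a, r a b & a \notin A.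

Hypothesis no_matching3 : ~ matching3.

Ltac contradict_matching3 a1 a2 a3 b1 b2 b3 :=
  exfalso; apply: no_matching3; exists a1, a2, a3, b1, b2, b3;
  split; apply/and3P; split; by [|rewrite eq_sym].

Lemma no_out_and_in_nbr_outside a1 a2 b1 b2 :
    r a2 b2 -> a1 != a2 -> b1 != b2 ->
  out_nbr_outside [set b1; b2] a1 -> ~ in_nbr_outside [set a1; a2] b1.
Proof.
move=> r22 na nb [b r1b] /[!inE] /norP[nb1 nb2] [a ra1] /[!inE] /norP[na1 na2].
by contradict_matching3 a1 a a2 b b1 b2.
Qed.

Section TwoMatching.
Variables a1 a2 b1 b2 : T.
Hypotheses (r11 : r a1 b1) (r22 : r a2 b2) (na : a1 != a2) (nb : b1 != b2).

Lemma edge_meets_matching2 a b : r a b -> [|| a == a1, a == a2, b == b1 | b == b2].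
Proof.
move=> rab; apply: contraT => /norP[na1 /norP[na2 /norP[nb1 nb2]]].
by contradict_matching3 a1 a2 a b1 b2 b.
Qed.

Lemma cover_by_left_ends :
  ~ in_nbr_outside [set a1; a2] b1 -> ~ in_nbr_outside [set a1; a2] b2 ->
  covers a1 a2.
Proof.
move=> no_b1 no_b2 a b rab; case: (boolP (a \in [set a1; a2])) => [|aA].
  by rewrite !inE => /orP[] ->; rewrite ?orbT.
move: (aA) (edge_meets_matching2 rab); rewrite !inE => /norP[/negbTE-> /negbTE->] /=.
by case/orP=> /eqP eb; [case: no_b1 | case: no_b2]; exists a; rewrite -?eb.
Qed.

Lemma cover_by_right_ends :
  ~ out_nbr_outside [set b1; b2] a1 -> ~ out_nbr_outside [set b1; b2] a2 ->
  covers b1 b2.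
Proof.
move=> no_a1 no_a2 a b rab; case: (boolP (b \in [set b1; b2])) => [|bB].
  by rewrite !inE => /orP[] ->; rewrite ?orbT.
move: (bB) (edge_meets_matching2 rab); rewrite !inE => /norP[/negbTE-> /negbTE->].
by rewrite !orbF => /orP[] /eqP ea; [case: no_a1 | case: no_a2]; exists b; rewrite -?ea.
Qed.

Lemma cover_by_crossed_ends :
  out_nbr_outside [set b1; b2] a1 -> in_nbr_outside [set a1; a2] b2 ->
  covers a1 b2.
Proof.
move=> out_a1 in_b2.
have no_b1 := no_out_and_in_nbr_outside r22 na nb out_a1.
have no_a2 : ~ out_nbr_outside [set b1; b2] a2.
  rewrite setUC => out_a2.
  by apply: (no_out_and_in_nbr_outside r11 _ _ out_a2); rewrite 1?setUC // eq_sym.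
have no21 : ~~ r a2 b1.
  apply/negP=> r21; case: out_a1 => b r1b /[!inE] /norP[nb1 nb2].
  case: in_b2 => a ra2 /[!inE] /norP[na1 na2].
  by contradict_matching3 a1 a2 a b b1 b2.
move=> a b rab.
have [//|na1] := eqVneq a a1.
have [_|nb2] := eqVneq b b2; first by rewrite !orbT.
exfalso; move: (edge_meets_matching2 rab); rewrite (negbTE na1) (negbTE nb2) orbF /=.
case/orP=> /eqP eq_ab.
- subst a; have [eb|nb1] := eqVneq b b1; first by rewrite -eb rab in no21.
  by apply: no_a2; exists b; rewrite // !inE negb_or nb1.
- subst b; have [ea|na2] := eqVneq a a2; first by rewrite -ea rab in no21.
  by apply: no_b1; exists a; rewrite // !inE negb_or na1.
Qed.

End TwoMatching.

Lemma two_cover_of_matching2 a1 a2 b1 b2 :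
  r a1 b1 -> r a2 b2 -> a1 != a2 -> b1 != b2 -> exists u v, covers u v.
Proof.
move=> r11 r22 na nb.
have [out_a1|no_a1] := classic (out_nbr_outside [set b1; b2] a1).
  have [in_b2|no_b2] := classic (in_nbr_outside [set a1; a2] b2).
    by exists a1, b2; apply: (cover_by_crossed_ends r11 r22).
  exists a1, a2; apply: (cover_by_left_ends r11 r22) => //.
  exact: no_out_and_in_nbr_outside r22 na nb out_a1.
have [out_a2|no_a2] := classic (out_nbr_outside [set b1; b2] a2); last first.
  by exists b1, b2; apply: (cover_by_right_ends r11 r22).
have no_b2 : ~ in_nbr_outside [set a1; a2] b2.
  rewrite setUC; apply: (no_out_and_in_nbr_outside r11); by rewrite 1?setUC // eq_sym.
have [in_b1|no_b1] := classic (in_nbr_outside [set a1; a2] b1).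
  by exists a2, b1; apply: (cover_by_crossed_ends r22 r11); rewrite 1?setUC // eq_sym.
by exists a1, a2; apply: (cover_by_left_ends r11 r22).
Qed.

Lemma two_cover_of_no_matching3 (x0 : T) : exists u v, covers u v.
Proof.
have [[a1 [b1 r11]]|no_edge] := classic (exists a b, r a b); last first.
  by exists x0, x0 => a b rab; case: no_edge; exists a, b.
have [[a2 [b2 [r22 na nb]]]|no_disjoint] :=
  classic (exists a2 b2, [/\ r a2 b2, a1 != a2 & b1 != b2]).
  exact: two_cover_of_matching2 r11 r22 na nb.
exists a1, b1 => a b rab.
have [//|na1] := eqVneq a a1.
have [_|nb1] := eqVneq b b1; first by rewrite !orbT.
by case: no_disjoint; exists a, b; split; rewrite // eq_sym.
Qed.

End SmallKonig.

Section Components.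
Variables (T : finType) (e : rel T) (S : {set T}).

Definition component (x : T) : {set T} := [set y in S | connect (induced e S) x y].

Lemma component_in_components x : x \in S -> component x \in components e S.
Proof. exact: imset_f. Qed.

Lemma connect_of_eq_component x y :
  y \in S -> component x = component y -> connect (induced e S) x y.
Proof.
move=> yS cxy; have : y \in component y by rewrite inE yS connect0.
by rewrite -cxy inE => /andP[].
Qed.

Lemma three_components x y z :
    x \in S -> y \in S -> z \in S ->
    ~~ connect (induced e S) x y -> ~~ connect (induced e S) x z ->
    ~~ connect (induced e S) y z ->
  2 < #|components e S|.
Proof.
move=> xS yS zS nxy nxz nyz; apply/card_gt2P.
exists (component x), (component y), (component z).
split; first by split; apply: component_in_components.
split; [apply: contraNneq nxy | apply: contraNneq nyz |
        rewrite eq_sym; apply: contraNneq nxz]; exact: connect_of_eq_component.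
Qed.

Lemma singleton_component K :
  K \in components e S -> #|K| = 1 ->
  exists2 w, w \in S & {in S, forall z, connect (induced e S) w z -> z = w}.
Proof.
case/imsetP=> w wS -> /eqP/cards1P[w' Kw]; exists w => // z zS wz.
have : z \in component w by rewrite inE zS.
have : w \in component w by rewrite inE wS connect0.
by rewrite /component Kw !inE => /eqP-> /eqP.
Qed.

Lemma isolated_side (A : {set T}) w y :
    closed (induced e S) A -> #|components e S| = 2 ->
    w \in S -> w \in A -> {in S, forall z, connect (induced e S) w z -> z = w} ->
    y \in S -> y \notin A ->
  A :&: S \subset [set w].
Proof.
move=> clA two_comps wS wA w_iso yS yA; apply/subsetP => z /setIP[zA zS].
rewrite inE; apply: contraT => zw.
suff : 2 < #|components e S| by rewrite two_comps.
have yw : y != w by apply: contraNneq yA => ->.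
apply: (three_components wS zS yS).
- exact: contra_neqN (w_iso z zS) zw.
- exact: contra_neqN (w_iso y yS) yw.
- by apply/negP => /(closed_connect clA); rewrite zA (negbTE yA).
Qed.

End Components.

Lemma setC_closed (T : finType) (r : rel T) (A : {set T}) :
  closed r A -> closed r (~: A).
Proof. by move=> clA x y /clA; rewrite !inE => ->. Qed.

Lemma exists_outside2 (T : finType) (A : {set T}) u v :
  2 < #|A| -> exists2 x, x \in A & x \notin [set u; v].
Proof.
move=> big; apply/subsetPn; apply: contraTN big => /subset_leq_card.
by rewrite cards2 -leqNgt => /leq_trans->; rewrite // ltnS leq_b1.
Qed.

Section CrossEdges.
Variables (T : finType) (e : rel T).

Definition cross (V1 V2 : {set T}) : rel T :=
  [rel a b | [&& a \in V1, b \in V2 & e a b]].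

Lemma matching3_cross V1 V2 :
  matching3 (cross V1 V2) ->
  exists a1 a2 a3 b1 b2 b3 : T,
    [/\ [&& a1 \in V1, a2 \in V1 & a3 \in V1],
        [&& b1 \in V2, b2 \in V2 & b3 \in V2],
        [&& e a1 b1, e a2 b2 & e a3 b3],
        [&& a1 != a2, a1 != a3 & a2 != a3] &
        [&& b1 != b2, b1 != b3 & b2 != b3]].
Proof.
case=> a1 [a2 [a3 [b1 [b2 [b3 [/and3P[]]]]]]].
move=> /and3P[a1V b1V e11] /and3P[a2V b2V e22] /and3P[a3V b3V e33] da db.
by exists a1, a2, a3, b1, b2, b3; rewrite a1V a2V a3V b1V b2V b3V e11 e22 e33.
Qed.

Lemma cover_closed (A : {set T}) u v :
  symmetric e -> covers (cross A (~: A)) u v -> closed (induced e (~: [set u; v])) A.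
Proof.
move=> sym_e cov x y /and3P[]; rewrite !in_setC => xuv yuv exy.
have hits a b :
    a \in A -> b \notin A -> e a b -> (a \in [set u; v]) || (b \in [set u; v]).
  by move=> aA bA eab; rewrite !inE -!orbA; apply: cov; rewrite /cross /= inE aA bA.
apply/idP/idP => [xA|yA]; apply: contraT => nA.
  by move: (hits x y xA nA exy); rewrite (negbTE xuv) (negbTE yuv).
by move: (hits y x yA nA); rewrite sym_e (negbTE xuv) (negbTE yuv) => /(_ exy).
Qed.

Lemma edge_of_small_side (A : {set T}) u v w :
    A :&: ~: [set u; v] \subset [set w] -> 3 <= #|A| ->
    (#|A| = 3 -> {in A &, forall x y, x != y -> e x y}) -> u != v ->
  e u v.
Proof.
move=> sub big tri uv.
have A_sub : A \subset [set u; v] :|: [set w].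
  apply/subsetP => x xA; rewrite inE; case: (boolP (x \in [set u; v])) => //= xuv.
  by apply: (subsetP sub); rewrite inE xA inE xuv.
have small : #|[set u; v] :|: [set w]| <= 3.
  by apply: leq_trans (leq_card_setU _ _) _; rewrite cards2 cards1 uv.
have A3 : #|A| = 3.
  by apply/eqP; rewrite eqn_leq big (leq_trans (subset_leq_card A_sub) small).
have EA : A = [set u; v] :|: [set w] by apply/eqP; rewrite eqEcard A_sub A3.
by apply: (tri A3); rewrite // EA !inE eqxx ?orbT.
Qed.

End CrossEdges.

Theorem lemma3 (T : finType) (e : rel T) (V1 V2 : {set T}) :
  symmetric e -> irreflexive e ->
  two_vertex_connected e ->
  (forall u v : T, ~ irrelevant_edge e u v) ->
  (forall u v : T, ~ non_isolating_cut e u v) ->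
  [disjoint V1 & V2] -> V1 :|: V2 = [set: T] ->
  3 <= #|V1| -> (#|V1| = 3 -> {in V1 &, forall x y, x != y -> e x y}) ->
  3 <= #|V2| -> (#|V2| = 3 -> {in V2 &, forall x y, x != y -> e x y}) ->
  exists a1 a2 a3 b1 b2 b3 : T,
    [/\ [&& a1 \in V1, a2 \in V1 & a3 \in V1],
        [&& b1 \in V2, b2 \in V2 & b3 \in V2],
        [&& e a1 b1, e a2 b2 & e a3 b3],
        [&& a1 != a2, a1 != a3 & a2 != a3] &
        [&& b1 != b2, b1 != b3 & b2 != b3]].
Proof.
move=> sym_e _ [_ _ no_cut_vertex] no_irrelevant no_non_isolating dis12 cov12.
move=> big1 tri1 big2 tri2.
have V2E : V2 = ~: V1.
  apply/setP => x; rewrite inE; have := in_setT x; rewrite -cov12 inE.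
  by case: (boolP (x \in V1)) => [/(disjointFr dis12)->|].
subst V2; apply: matching3_cross; apply: NNPP => no3.
have /card_gt0P[x0 _] : 0 < #|V1| by apply: leq_trans big1.
have [u [v cov]] := two_cover_of_no_matching3 no3 x0.
set S := ~: [set u; v].
have clV1 : closed (induced e S) V1 := cover_closed sym_e cov.
have [x xV1 xuv] := exists_outside2 u v big1.
have [y yV2 yuv] := exists_outside2 u v big2.
have [xS yS] : x \in S /\ y \in S by rewrite !in_setC xuv yuv.
have cut : disconnects e [set u; v].
  move=> /(_ x y xS yS) /(closed_connect clV1); rewrite xV1.
  by move: yV2; rewrite inE => /negbTE->.
have uv : u != v.
  by apply/eqP => eq_uv; apply: (no_cut_vertex u); move: cut; rewrite -eq_uv setUid.
have no_uv : ~ e u v by move=> euv; apply: (no_irrelevant u v).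
have [_ [two_comps [K K_comp K1]]] : isolating_cut e u v.
  by apply: NNPP => not_iso; apply: (no_non_isolating u v).
have [w wS w_iso] := singleton_component K_comp K1.
apply: no_uv; case: (boolP (w \in V1)) => wV1.
  apply: (edge_of_small_side _ big1 tri1 uv).
  by apply: (isolated_side clV1 two_comps wS wV1 w_iso yS); rewrite inE in yV2.
apply: (edge_of_small_side _ big2 tri2 uv).
apply: (isolated_side (setC_closed clV1) two_comps wS _ w_iso xS); by rewrite inE ?xV1.
Qed.
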